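(* Let $FAF=\langle\mathcal A,\rho\rangle$ be a fuzzy argumentation framework and $E\subseteq\mathcal A$. For every $C\subseteq\mathcal A$: $E=GE(FAF,C)$ if and only if for every $S\in SCCS_{FAF}$, $$E\cap S=GE\big(FAF\downarrow_{R_{FAF}(S,E)},\,D_{FAF}(S,E)\cap C\big).$$
   Context: Fuzzy sets: a fuzzy set on a crisp set $X$ is a map $S:X\to[0,1]$; $S\subseteq S'$ means $S(x)\le S'(x)$ for all $x$; $\cap,\cup$ are pointwise $\min,\max$; $\mathrm{Supp}(S)=\{x:S(x)>0\}$. A fuzzy point $(x,a)$, $a\in(0,1]$, has value $a$ at $x$ and $0$ elsewhere; $(x,a)\in S$ means $a\le S(x)$. $a*b=\min\{a,b\}$. A fuzzy argumentation framework (FAF) is $\langle\mathcal A,\rho\rangle$ with $\mathrm{Args}$ a crisp set, $\mathcal A$ a fuzzy set on $\mathrm{Args}$, $\rho:\mathrm{Args}\times\mathrm{Args}\to[0,1]$, $\rho_{AB}=\rho(A,B)$; $A$ attacks $B$ iff $\rho_{AB}>0$. Fuzzy arguments are fuzzy points $(A,a)\in\mathcal A$. An attack of $(A,a)$ on $(B,b)$ is tolerable if $\min\{a,\rho_{AB}\}+b\le1$, sufficient otherwise. $(A,a)$ weakens $(B,b)$ to $(B,b')$, $b'=\min\{1-\min\{a,\rho_{AB}\},b\}$. $T\subseteq\mathcal A$ weakening defends $(C,c)$ (i.e. $(C,c)$ is acceptable w.r.t. $T$) if for every fuzzy argument $(B,b)$ sufficiently attacking $(C,c)$ there is $(A',a')\in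 T$ weakening $(B,b)$ to some $(B,b')$ which tolerably attacks $(C,c)$. For $C\subseteq\mathcal A$, the characteristic function of $FAF$ in $C$ maps $T\subseteq C$ to $F_{FAF,C}(T)$, the union of all fuzzy arguments $(A,a)\in C$ that are weakening defended by $T$; the grounded extension of $FAF$ in $C$, $GE(FAF,C)$, is the least fixed point of $F_{FAF,C}$ with respect to $\subseteq$. Path-equivalence on $\mathrm{Args}$: $A\sim B$ iff $A=B$ or there are chains of attacks from $A$ to $B$ and from $B$ to $A$. $SCC_{FAF}(A)$ is the fuzzy set with value $\mathcal A(B)$ at each $B\sim A$, $0$ elsewhere; $SCCS_{FAF}$ is the set of these. $outparents_{FAF}(S)$ is the fuzzy set of $(B,\mathcal A(B))$ with $B\notin\mathrm{Supp}(S)$ attacking some argument of $\mathrm{Supp}(S)$. For $T\subseteq\mathcal A$, $FAF\downarrow_T=\langle T,\rho|_{\mathrm{Supp}(T)\times\mathrm{Supp}(T)}\rangle$, and notions in $FAF\downarrow_T$ refer to its own fuzzy arguments and attacks. For $E\subseteq\mathcal A$, $S\in SCCS_{FAF}$: $L_{FAF}(S,E)(A)=\max_B\big((E\cap outparents_{FAF}(S))(B)*\rho_{BA}\big)$ for $A\in\mathrm{Supp}(S)$, $0$ elsewhere; $R_{FAF}(S,E)(A)=\min\{\mathcal A(A),1-L_{FAF}(S,E)(A)\}$ for $A\in\mathrm{Supp}(S)$, $0$ elsewhere; $D_{FAF}(S,E)$ is the union of fuzzy points $(A,a)\in R_{FAF}(S,E)$ such that for every $(B,b)\in outparents_{FAF}(S)$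 sufficiently attacking $(A,a)$ there is $(C,c)\in E$ weakening $(B,b)$ to some $(B,b')$ which tolerably attacks $(A,a)$. *)

From HB Require Import structures.
From mathcomp Require Import all_boot all_order all_algebra.
From mathcomp Require Import boolp classical_sets reals.
Set Implicit Arguments. Unset Strict Implicit. Unset Printing Implicit Defensive.
Import Order.TTheory GRing.Theory Num.Theory.
Local Open Scope ring_scope.
Local Open Scope classical_set_scope.

Section FuzzyArgumentation.
Variables (R : realType) (Args : finType).

Definition fuzzyset := Args -> R.

Definition is_fuzzy (S : fuzzyset) : Prop := forall x, 0 <= S x <= 1.

Definition fsubset (S S' : fuzzyset) : Prop := forall x, S x <= S' x.
Definition fsame (S S' : fuzzyset) : Prop := forall x, S x = S' x.
Definition fcap (S S' : fuzzyset) : fuzzyset := fun x => Num.min (S x) (S' x).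
Definition supp (S : fuzzyset) : pred Args := fun x => 0 < S x.

Definition fpoint_in (S : fuzzyset) (x : Args) (a : R) : Prop :=
  0 < a /\ a <= 1 /\ a <= S x.

(* Union of all fuzzy points (x,a) satisfying P x a (value 0 if there is none). *)
Definition union_pts (P : Args -> R -> Prop) : fuzzyset :=
  fun x => sup [set a | P x a].

Record faf := FAF { fargs : fuzzyset; frho : Args -> Args -> R }.

Definition wf_faf (X : faf) : Prop :=
  is_fuzzy (fargs X) /\ forall x y, 0 <= frho X x y <= 1.

Definition attacks (X : faf) (A B : Args) : bool := 0 < frho X A B.

Definition farg (X : faf) (A : Args) (a : R) : Prop := fpoint_in (fargs X) A a.

Definition tolerable (X : faf) (A : Args) (a : R) (B : Args) (b : R) : Prop :=
  Num.min a (frho X A B) + b <= 1.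
Definition sufficient (X : faf) (A : Args) (a : R) (B : Args) (b : R) : Prop :=
  1 < Num.min a (frho X A B) + b.

Definition weaken (X : faf) (A : Args) (a : R) (B : Args) (b : R) : R :=
  Num.min (1 - Num.min a (frho X A B)) b.

Definition wdefends (X : faf) (T : fuzzyset) (C : Args) (c : R) : Prop :=
  forall B b, farg X B b -> sufficient X B b C c ->
    exists A' a', fpoint_in T A' a' /\ tolerable X B (weaken X A' a' B b) C c.

Definition charfun (X : faf) (Cs T : fuzzyset) : fuzzyset :=
  union_pts (fun A a => fpoint_in Cs A a /\ wdefends X T A a).

Definition is_GE (X : faf) (Cs E : fuzzyset) : Prop :=
  [/\ fsubset E Cs, fsame (charfun X Cs E) E &
      forall T, fsubset T Cs -> fsame (charfun X Cs T) T -> fsubset E T].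

Definition path_equiv (X : faf) (A B : Args) : bool :=
  (A == B) || (connect (attacks X) A B && connect (attacks X) B A).

Definition SCC (X : faf) (A : Args) : fuzzyset :=
  fun B => if path_equiv X A B then fargs X B else 0.

Definition in_SCCS (X : faf) (S : fuzzyset) : Prop := exists A, S = SCC X A.

Definition outparents (X : faf) (S : fuzzyset) : fuzzyset :=
  fun B => if ~~ supp S B && [exists A, supp S A && attacks X B A]
           then fargs X B else 0.

Definition restrict (X : faf) (T : fuzzyset) : faf :=
  FAF T (fun A B => if supp T A && supp T B then frho X A B else 0).

Definition Lset (X : faf) (S E : fuzzyset) : fuzzyset :=
  fun A => if supp S A then
             \big[Num.max/0]_(B : Args)
                Num.min (fcap E (outparents X S) B) (frho X B A)
           else 0.

Definition Rset (X : faf) (S E : fuzzyset) : fuzzyset :=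
  fun A => if supp S A then Num.min (fargs X A) (1 - Lset X S E A) else 0.

Definition Dset (X : faf) (S E : fuzzyset) : fuzzyset :=
  union_pts (fun A a => fpoint_in (Rset X S E) A a /\
    forall B b, fpoint_in (outparents X S) B b -> sufficient X B b A a ->
      exists C c, fpoint_in E C c /\ tolerable X B (weaken X C c B b) A a).

End FuzzyArgumentation.

(* Weakening defence can be read level by level: (C,c) is defended by T iff every
   attacker B, taken at its full degree, either attacks (C,c) tolerably or is attacked
   by some A with T(A) >= c and rho(A,B) >= c.  Hence the characteristic function is
   monotone and drops by at most e when T is lowered by e; as Args is finite, its least
   fixed point is the supremum of the Kleene iterates, and it is conflict-free.

   Fix an SCC S.  An attacker of S from outside is an out-parent of S, and the
   arguments attacking an out-parent lie outside S as well.  So for a candidate that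
   agrees with E outside S, defending an argument of S amounts to three things:
   defence against the out-parents (the set D(S,E)), surviving the attacks of the
   out-parents accepted in E, which being conflict-free cannot be countered (the set
   R(S,E)), and defence inside FAF restricted to R(S,E).  Hence on S the
   characteristic functions of FAF in C and of the restriction in D(S,E) /\ C agree,
   which gives the "only if" direction.  Conversely R(S,E) and D(S,E) only depend on E
   at arguments that reach S but are not reached from it, so by well-founded induction
   along the condensation of the attack graph E coincides with GE(FAF,C). *)

From HB Require Import structures.
From mathcomp Require Import all_boot all_order all_algebra.
From mathcomp Require Import boolp classical_sets reals real_interval.
From mathcomp Require Import lra.
Import Order.TTheory GRing.Theory Num.Theory.
Local Open Scope ring_scope.

Ltac case_minmax := repeat match goal with
  | |- context [Num.min ?x ?y] => case: (leP x y)
  | |- context [Num.max ?x ?y] => case: (leP x y)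
  end; intros.

Section Levels.
Local Set Implicit Arguments.
Local Unset Strict Implicit.
Variable R : realType.
Local Open Scope classical_set_scope.
Implicit Types u v c M : R.

Lemma le_by_levels u v :
  0 <= v -> (forall c, 0 < c -> c <= u -> c <= v) -> u <= v.
Proof.
move=> v0 uv; case: (lerP u 0) => u0; last exact: uv u0 (lexx u).
exact: le_trans u0 v0.
Qed.

Lemma eq_by_levels u v : 0 <= u -> 0 <= v ->
  (forall c, 0 < c -> c <= u <-> c <= v) -> u = v.
Proof.
move=> u0 v0 uv; apply/eqP; rewrite eq_le.
by apply/andP; split; apply: le_by_levels => // c c0 /(uv c c0).
Qed.

Lemma sup_pos_le M : sup [set c | 0 < c /\ c <= M] = Num.max M 0.
Proof.
case: (lerP M 0) => M0.
  rewrite (_ : [set c | _] = set0) ?sup0 //.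
  by apply/seteqP; split=> c //= [c0 cM]; lra.
rewrite (_ : [set c | _] = `]0, M]) ?sup_itv ?bnd_simp //.
apply/seteqP; split=> c /=; rewrite in_itv /=; first by case=> -> ->.
by case/andP.
Qed.

Lemma bigmax0_geP (I : finType) (F : I -> R) c :
  0 < c -> c <= \big[Num.max/0]_i F i <-> exists i, c <= F i.
Proof.
move=> c0; split=> [cF|[i]]; last by move/le_trans; apply; apply: le_bigmax.
apply/not_existsP => Fc; move: cF; rewrite leNgt => /negP; apply.
by apply/bigmax_ltP; split=> // i _; rewrite ltNge; apply/negP/Fc.
Qed.

End Levels.

Section Defence.
Local Set Implicit Arguments.
Local Unset Strict Implicit.
Variables (R : realType) (Args : finType).
Local Notation fz := (fuzzyset R Args).
Implicit Types (Z : faf R Args) (T U Cs : fz) (A B C : Args) (c e : R).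

Definition rho_bounded Z := forall A B, 0 <= frho Z A B <= 1.

Definition defended_at Z T C c :=
  forall B, 0 < fargs Z B ->
    Num.min (fargs Z B) (frho Z B C) + c <= 1 \/
    exists A, c <= T A /\ c <= frho Z A B.

Definition defense_bound Z T C : R :=
  \big[Num.min/1]_B
    (if 0 < fargs Z B then
       Num.max (1 - Num.min (fargs Z B) (frho Z B C))
               (\big[Num.max/0]_A Num.min (T A) (frho Z A B))
     else 1).

Definition conflict_free Z U := forall A B, Num.min (U A) (frho Z A B) + U B <= 1.

(* Attackers need only be tested at their full degree, and defenders at degree c. *)
Lemma wdefendsE Z T C c : rho_bounded Z -> 0 < c -> c <= 1 ->
  wdefends Z T C c <-> defended_at Z T C c.
Proof.
move=> rhoZ c0 c1; rewrite /wdefends /farg /fpoint_in /sufficient /tolerable /weaken.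
split=> [wd B B0 | dd B b [b0 [b1 bB]] suf]; have /andP[_ rBC1] := rhoZ B C.
- case: (lerP (Num.min (fargs Z B) (frho Z B C) + c) 1) => [|hB]; [by left | right].
  have [||A [a [[a0 [a1 aA]] tol]]] := wd B (Num.min (fargs Z B) 1).
  + by split; [rewrite lt_min B0 ltr01 | split; rewrite ge_min lexx ?orbT].
  + by move: hB rBC1; case_minmax; lra.
  have [ca cr] : c <= a /\ c <= frho Z A B.
    by move: tol hB rBC1; case_minmax; lra.
  by exists A; split=> //; apply: le_trans aA.
- have B0 : 0 < fargs Z B by apply: lt_le_trans bB.
  case: (dd B B0) => [|[A [cA cr]]].
    by move: suf rBC1; case_minmax; lra.
  exists A, c; split=> //; rewrite (min_idPl cr).
  by move: rBC1; case_minmax; lra.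
Qed.

Lemma le_defense_bound Z T C c : 0 < c ->
  c <= defense_bound Z T C <-> c <= 1 /\ defended_at Z T C c.
Proof.
move=> c0; split=> [/bigmin_geP[c1 cB] | [c1 dd]].
- split=> // B B0; move: (cB B isT); rewrite B0 le_max => /orP[|/(bigmax0_geP _ c0)[A]].
    by left; lra.
  by rewrite le_min => /andP[cA cr]; right; exists A.
- apply/bigmin_geP; split=> // B _; case: ifP => // B0; rewrite le_max.
  case: (dd B B0) => [|[A [cA cr]]]; first by move=> h; apply/orP; left; lra.
  by apply/orP; right; apply/(bigmax0_geP _ c0); exists A; rewrite le_min cA cr.
Qed.

Lemma charfunE Z Cs T C : rho_bounded Z ->
  charfun Z Cs T C = Num.max (Num.min (Cs C) (defense_bound Z T C)) 0.
Proof.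
move=> rhoZ; rewrite /charfun /union_pts -sup_pos_le; congr sup.
apply/seteqP; split=> c /= [].
- move=> [c0 [c1 cC]] /(wdefendsE _ _ rhoZ c0 c1) dd; split=> //.
  by rewrite le_min cC; apply/(le_defense_bound _ _ _ c0).
- move=> c0; rewrite le_min => /andP[cC /(le_defense_bound _ _ _ c0)[c1 dd]].
  by split; [|apply/(wdefendsE _ _ rhoZ c0 c1)].
Qed.

Lemma charfun_ge0 Z Cs T C : rho_bounded Z -> 0 <= charfun Z Cs T C.
Proof. by move=> rhoZ; rewrite charfunE // le_max lexx orbT. Qed.

Lemma charfun_le Z Cs T C : rho_bounded Z -> 0 <= Cs C -> charfun Z Cs T C <= Cs C.
Proof. by move=> rhoZ C0; rewrite charfunE // ge_max C0 ge_min lexx. Qed.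

Lemma charfun_levels Z Cs T C c : rho_bounded Z -> 0 < c ->
  c <= charfun Z Cs T C <-> [/\ c <= 1, c <= Cs C & defended_at Z T C c].
Proof.
move=> rhoZ c0; rewrite charfunE // le_max [c <= 0]leNgt c0 orbF le_min.
split=> [/andP[cC /(le_defense_bound _ _ _ c0)[]] | [c1 cC dd]]; first by [].
by rewrite cC; apply/(le_defense_bound _ _ _ c0).
Qed.

Lemma charfun_le1 Z Cs T C : rho_bounded Z -> charfun Z Cs T C <= 1.
Proof.
by move=> rhoZ; apply: le_by_levels => // c c0 /(charfun_levels _ _ _ rhoZ c0)[].
Qed.

Lemma le_charfun Z Cs T T' C : rho_bounded Z ->
  (forall A B, 0 < fargs Z B -> attacks Z A B -> T A <= T' A) ->
  charfun Z Cs T C <= charfun Z Cs T' C.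
Proof.
move=> rhoZ TT'; apply: le_by_levels; first exact: charfun_ge0.
move=> c c0; rewrite !charfun_levels // => -[c1 cC dd]; split=> // B B0.
case: (dd B B0) => [|[A [cA cr]]]; [by left | right; exists A; split=> //].
by apply: le_trans cA (TT' A B B0 _); rewrite /attacks; lra.
Qed.

Lemma charfun_congr Z Cs T T' C : rho_bounded Z ->
  (forall A B, 0 < fargs Z B -> attacks Z A B -> T A = T' A) ->
  charfun Z Cs T C = charfun Z Cs T' C.
Proof.
move=> rhoZ TT'; apply/eqP; rewrite eq_le !le_charfun // => A B B0 AB.
  by rewrite (TT' A B).
by rewrite (TT' A B).
Qed.

Lemma charfun_shift Z Cs T C e : rho_bounded Z -> 0 <= e ->
  charfun Z Cs T C - e <= charfun Z Cs (fun x => T x - e) C.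
Proof.
move=> rhoZ e0; set v := charfun Z Cs T C.
case: (lerP (v - e) 0) => [ve|ve]; first exact: le_trans ve (charfun_ge0 _ _ _ rhoZ).
have v0 : 0 < v by lra.
have [v1 vC dd] := (charfun_levels _ _ _ rhoZ v0).1 (lexx v).
apply/(charfun_levels _ _ _ rhoZ ve); split; [lra | lra | move=> B B0].
case: (dd B B0) => [|[A [vA vr]]]; [left; lra | right; exists A; split; lra].
Qed.

Lemma conflict_free_charfun Z Cs U : rho_bounded Z ->
  (forall x, U x <= Cs x) -> (forall x, Cs x <= fargs Z x) ->
  conflict_free Z U -> conflict_free Z (charfun Z Cs U).
Proof.
move=> rhoZ UC Cf cfU x y; rewrite leNgt; apply/negP => hxy.
set a := charfun Z Cs U x in hxy; set b := charfun Z Cs U y in hxy.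
have /andP[_ rxy1] := rhoZ x y.
have a1 : a <= 1 by apply: charfun_le1.
have b1 : b <= 1 by apply: charfun_le1.
have [b0 a0] : 0 < b /\ 0 < a by move: hxy; case_minmax; lra.
have [_ aC dx] := (charfun_levels _ _ _ rhoZ a0).1 (lexx a).
have [_ _ dy] := (charfun_levels _ _ _ rhoZ b0).1 (lexx b).
have ax := le_trans aC (Cf x).
case: (dy x (lt_le_trans a0 ax)) => [|[z [bz rzx]]].
  by move: hxy; case_minmax; lra.
have bz' := le_trans bz (le_trans (UC z) (Cf z)).
case: (dx z (lt_le_trans b0 bz')) => [|[w [aw rwz]]].
  by move: hxy; case_minmax; lra.
by move: (cfU w z) hxy; case_minmax; lra.
Qed.

Lemma is_GE_unique Z Cs E1 E2 : is_GE Z Cs E1 -> is_GE Z Cs E2 -> E1 = E2.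
Proof.
move=> [E1C E1fix E1least] [E2C E2fix E2least]; apply/funext => x.
by apply/eqP; rewrite eq_le E1least // E2least.
Qed.

Lemma rho_bounded_restrict X T : rho_bounded X -> rho_bounded (restrict X T).
Proof. by move=> rhoX A B /=; case: ifP => _; rewrite ?lexx ?ler01. Qed.

Lemma attacks_restrict X T A B : attacks (restrict X T) A B ->
  [/\ 0 < T A, 0 < T B & attacks X A B].
Proof. by rewrite /attacks /=; case: ifP => [/andP[] | _]; rewrite ?ltxx. Qed.

End Defence.

Section LeastFixpoint.
Local Set Implicit Arguments.
Local Unset Strict Implicit.
Variables (R : realType) (Args : finType) (Z : faf R Args) (Cs : fuzzyset R Args).
Hypothesis rhoZ : rho_bounded Z.
Hypothesis Cs_ge0 : forall x, 0 <= Cs x.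
Local Notation F := (charfun Z Cs).

Definition kleene n : fuzzyset R Args := iter n F (fun=> 0).

Lemma kleene_ge0 n x : 0 <= kleene n x.
Proof. by case: n => [|n] /=; rewrite ?lexx ?charfun_ge0. Qed.

Lemma kleene_le n x : kleene n x <= Cs x.
Proof. by case: n => [|n] /=; rewrite ?Cs_ge0 ?charfun_le. Qed.

Lemma kleene_homo x : {homo kleene^~ x : m n / (m <= n)%N >-> m <= n}.
Proof.
apply: (@homo_leq _ _ (fun u v => u <= v)) => [u|v u w|n]; [exact: lexx | exact: le_trans |].
elim: n x => [|n IHn] x /=; first exact: charfun_ge0.
by apply: le_charfun => // A B _ _; apply: IHn.
Qed.

Definition lfp : fuzzyset R Args := fun x => sup (range (kleene^~ x)).

Lemma has_sup_kleene x : has_sup (range (kleene^~ x)).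
Proof.
by split; [exists (kleene 0 x), 0%N | exists (Cs x) => _ [n _ <-]; apply: kleene_le].
Qed.

Lemma kleene_le_lfp n x : kleene n x <= lfp x.
Proof. by apply: sup_upper_bound (has_sup_kleene x) _ _; exists n. Qed.

Lemma lfp_le x v : (forall n, kleene n x <= v) -> lfp x <= v.
Proof. by move=> kv; apply: ge_sup => [|_ [n _ <-]]; [exists (kleene 0 x), 0%N|]. Qed.

Lemma lfp_ge0 x : 0 <= lfp x.
Proof. exact: le_trans (kleene_ge0 0 x) (kleene_le_lfp 0 x). Qed.

Lemma lfp_le_Cs x : lfp x <= Cs x.
Proof. by apply: lfp_le => n; apply: kleene_le. Qed.

(* Args is finite, so one Kleene iterate approximates lfp uniformly. *)
Lemma lfp_approx e : 0 < e -> exists N, forall x, lfp x - e < kleene N x.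
Proof.
move=> e0; have /choice[N hN] : forall x, exists n, lfp x - e < kleene n x.
  by move=> x; have [_ [n _ <-] ?] := sup_adherent e0 (has_sup_kleene x); exists n.
exists (\max_x N x)%N => x; apply: lt_le_trans (hN x) _.
by apply: kleene_homo; apply: leq_bigmax.
Qed.

Lemma charfun_lfp x : F lfp x = lfp x.
Proof.
apply/eqP; rewrite eq_le; apply/andP; split.
- apply/ler_addgt0Pr => e e0; have [N hN] := lfp_approx e0.
  have := charfun_shift Cs lfp x rhoZ (ltW e0).
  have : F (fun y => lfp y - e) x <= F (kleene N) x.
    by apply: le_charfun => // A B _ _; apply/ltW/hN.
  have := kleene_le_lfp N.+1 x; rewrite /=; lra.
- apply: lfp_le => n; apply: le_trans (kleene_homo x (leqnSn n)) _.
  by apply: le_charfun => // A B _ _; apply: kleene_le_lfp.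
Qed.

Lemma lfp_least T : (forall x, F T x <= T x) -> forall x, lfp x <= T x.
Proof.
move=> FT x; apply: lfp_le => n; elim: n x => [|n IHn] x /=.
  exact: le_trans (charfun_ge0 _ _ _ rhoZ) (FT x).
by apply: le_trans (FT x); apply: le_charfun => // A B _ _; apply: IHn.
Qed.

Lemma is_GE_lfp : is_GE Z Cs lfp.
Proof.
split=> [x | x | T _ FT x]; [exact: lfp_le_Cs | exact: charfun_lfp |].
by apply: lfp_least => y; rewrite FT.
Qed.

Lemma conflict_free_lfp : (forall x, Cs x <= fargs Z x) -> conflict_free Z lfp.
Proof.
move=> Cf; have cfK n : conflict_free Z (kleene n).
  elim: n => [x y /= | n IHn]; last exact: conflict_free_charfun (kleene_le n) Cf IHn.
  by have /andP[r0 _] := rhoZ x y; case_minmax; lra.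
move=> x y; rewrite leNgt; apply/negP => hxy.
set d := Num.min (lfp x) (frho Z x y) + lfp y - 1.
have [|N hN] := lfp_approx (e := d / 2); first by rewrite /d; lra.
by move: (cfK N x y) (hN x) (hN y) hxy; rewrite /d; case_minmax; lra.
Qed.

End LeastFixpoint.

Lemma connect_strict_ind (T : finType) (e : rel T) (P : T -> Prop) :
  (forall x, (forall y, connect e y x -> ~~ connect e x y -> P y) -> P x) ->
  forall x, P x.
Proof.
move=> IH x; have [n] := ubnP #|[set y | connect e y x && ~~ connect e x y]|.
elim: n x => // n IHn x; rewrite ltnS => hx; apply: IH => y yx nxy; apply: IHn.
apply: leq_trans hx; apply: proper_card; apply/properP; split.
- apply/fintype.subsetP => z; rewrite !inE => /andP[zy nyz].
  by rewrite (connect_trans zy yx); apply: contra nyz; apply: connect_trans.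
- by exists y; rewrite !inE ?yx ?nxy ?connect0.
Qed.

Section SCC.
Local Set Implicit Arguments.
Local Unset Strict Implicit.
Variables (R : realType) (Args : finType) (X : faf R Args) (A0 : Args).
Hypothesis fargs01 : is_fuzzy (fargs X).
Hypothesis rhoX : rho_bounded X.
Local Notation S := (SCC X A0).
Local Notation OP := (outparents X S).
Local Notation connect := (connect (attacks X)).

Lemma fargs_ge0 x : 0 <= fargs X x.
Proof. by case/andP: (fargs01 x). Qed.

Lemma supp_SCC x : supp S x = [&& connect A0 x, connect x A0 & 0 < fargs X x].
Proof.
rewrite /supp /SCC /path_equiv; case: eqP => [<-|_] /=; rewrite ?connect0 //.
by case: (connect A0 x); case: (connect x A0); rewrite /= ?ltxx.
Qed.

Lemma SCC_ge0 x : 0 <= S x.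
Proof. by rewrite /SCC; case: ifP; rewrite ?fargs_ge0. Qed.

Lemma supp_SCC_convex A B C : supp S A -> connect A B -> connect B C ->
  supp S C -> 0 < fargs X B -> supp S B.
Proof.
rewrite !supp_SCC => /and3P[A0A _ _] AB BC /and3P[_ CA0 _] B0.
by rewrite (connect_trans A0A AB) (connect_trans BC CA0).
Qed.

Lemma outparents_ge0 B : 0 <= OP B.
Proof. by rewrite /outparents; case: ifP; rewrite ?fargs_ge0. Qed.

Lemma outparents_pos B : 0 < OP B ->
  [/\ ~~ supp S B, exists2 A, supp S A & attacks X B A & OP B = fargs X B].
Proof.
rewrite /outparents; case: ifP => [|_]; last by rewrite ltxx.
by case/andP=> nSB /existsP[A /andP[SA BA]] _; split=> //; exists A.
Qed.

Lemma outparentsE B A : ~~ supp S B -> supp S A -> attacks X B A -> OP B = fargs X B.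
Proof.
by move=> nSB SA BA; rewrite /outparents nSB; case: existsP => // -[]; exists A; rewrite SA.
Qed.

Lemma outparent_upstream B y : 0 < OP B -> connect y B ->
  connect y A0 && ~~ connect A0 y.
Proof.
move=> OP0 yB; have [nSB [A SA BA] OPB] := outparents_pos OP0.
move: (SA); rewrite supp_SCC => /and3P[_ AA0 _].
have BA0 := connect_trans (connect1 BA) AA0.
rewrite (connect_trans yB BA0); apply: contra nSB => A0y.
by rewrite supp_SCC (connect_trans A0y yB) BA0 -OPB OP0.
Qed.

Lemma Rset_congr E1 E2 : (forall x, 0 <= E1 x) -> (forall x, 0 <= E2 x) ->
  (forall B, 0 < OP B -> E1 B = E2 B) -> Rset X S E1 = Rset X S E2.
Proof.
move=> E1_ge0 E2_ge0 E12; apply/funext => x; rewrite /Rset; case: ifP => // Sx.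
rewrite /Lset Sx; congr (Num.min _ (1 - _)); apply: eq_bigr => B _.
congr (Num.min _ _); rewrite /fcap.
case: (ltrP 0 (OP B)) => [/E12 -> // | OP0].
have -> : OP B = 0 by apply/eqP; rewrite eq_le OP0 outparents_ge0.
by rewrite (min_idPr (E1_ge0 B)) (min_idPr (E2_ge0 B)).
Qed.

Lemma DsetE E : Dset X S E = charfun (FAF OP (frho X)) (Rset X S E) E.
Proof. by []. Qed.

Lemma Dset_congr E1 E2 : (forall x, 0 <= E1 x) -> (forall x, 0 <= E2 x) ->
  (forall A B, 0 < OP B -> connect A B -> E1 A = E2 A) -> Dset X S E1 = Dset X S E2.
Proof.
move=> E1_ge0 E2_ge0 E12; apply/funext => x; rewrite !DsetE.
rewrite (Rset_congr E1_ge0 E2_ge0) => [|B OPB]; last exact: E12 OPB (connect0 _ _).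
by apply: charfun_congr => // A B OPB AB; apply: E12 OPB (connect1 AB).
Qed.

Section Local.
Local Set Implicit Arguments.
Local Unset Strict Implicit.
Variables (Cs E : fuzzyset R Args).
Hypothesis Cs_ge0 : forall x, 0 <= Cs x.
Hypothesis Cs_le_fargs : forall x, Cs x <= fargs X x.
Hypothesis E_le_fargs : forall x, E x <= fargs X x.
Local Notation L := (Lset X S E).
Local Notation RR := (Rset X S E).
Local Notation DD := (Dset X S E).
Local Notation Y := (restrict X RR).
Local Notation Zout := (FAF OP (frho X)).

Lemma RsetE x : supp S x -> RR x = Num.min (fargs X x) (1 - L x).
Proof. by rewrite /Rset => ->. Qed.

Lemma supp_Rset x : 0 < RR x -> supp S x.
Proof. by rewrite /Rset; case: ifP; rewrite ?ltxx. Qed.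

Lemma Lset_ge x P : supp S x -> Num.min (Num.min (E P) (OP P)) (frho X P x) <= L x.
Proof. by rewrite /Lset => ->; apply: (le_bigmax _ _ P). Qed.

Lemma Lset_witness x c : supp S x -> 0 < c -> c <= L x ->
  exists P, [/\ c <= E P, c <= OP P & c <= frho X P x].
Proof.
rewrite /Lset => -> c0 /(bigmax0_geP _ c0)[P]; rewrite /fcap !le_min => /andP[/andP[]].
by exists P.
Qed.

Lemma Rset_ge0 x : 0 <= RR x.
Proof.
rewrite /Rset; case: ifP => // Sx; rewrite le_min fargs_ge0 subr_ge0 /Lset Sx.
apply/bigmax_leP; split=> // P _; have /andP[_ r1] := rhoX P x.
by rewrite ge_min r1 orbT.
Qed.

Lemma Rset_le_fargs x : RR x <= fargs X x.
Proof. by rewrite /Rset; case: ifP; rewrite ?ge_min ?lexx ?fargs_ge0. Qed.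

Lemma Dset_le_Rset x : DD x <= RR x.
Proof. by rewrite DsetE charfun_le ?Rset_ge0. Qed.

Lemma E_le_Rset x : conflict_free X E -> supp S x -> E x <= RR x.
Proof.
move=> cfE Sx; rewrite RsetE // le_min E_le_fargs /=.
suff : L x <= 1 - E x by lra.
rewrite /Lset Sx; apply/bigmax_leP; split=> [|P _].
  by have /andP[_ f1] := fargs01 x; have := E_le_fargs x; lra.
by move: (cfE P x); rewrite /fcap; case_minmax; lra.
Qed.

Section Transfer.
Local Set Implicit Arguments.
Local Unset Strict Implicit.
Variable T : fuzzyset R Args.
Hypothesis T_out : forall x, ~~ supp S x -> T x = E x.

Lemma defended_outparents C c : 0 < c ->
  defended_at X T C c -> defended_at Zout E C c.
Proof.
move=> c0 dd B OP0; have [nSB [A SA BA] OPB] := outparents_pos OP0.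
rewrite /= OPB in OP0 *; case: (dd B OP0) => [|[A' [cA' rA'B]]]; [by left | right].
have nSA' : ~~ supp S A'.
  apply: contra nSB => SA'; apply: supp_SCC_convex SA' _ (connect1 BA) SA OP0.
  by apply: connect1; rewrite /attacks; lra.
by exists A'; rewrite -T_out.
Qed.

Lemma defended_le_Rset C c : conflict_free X E -> supp S C -> 0 < c -> c <= 1 ->
  c <= fargs X C -> defended_at X T C c -> c <= RR C.
Proof.
move=> cfE SC c0 c1 cC dd; rewrite RsetE // le_min cC /=.
suff : L C <= 1 - c by lra.
rewrite /Lset SC; apply/bigmax_leP; split=> [|P _]; first lra.
rewrite leNgt; apply/negP; rewrite /fcap => hP.
have /andP[_ rPC1] := rhoX P C.
have OP0 : 0 < OP P by move: hP (outparents_ge0 P); case_minmax; lra.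
have [nSP _ OPP] := outparents_pos OP0.
case: (dd P _) => [|  |[A [cA rAP]]]; rewrite -?OPP //.
  by move: hP; rewrite OPP; case_minmax; lra.
have nSA : ~~ supp S A.
  apply: contra nSP => SA; apply: supp_SCC_convex SA _ _ SC _; rewrite -?OPP //.
    by apply: connect1; rewrite /attacks; lra.
  by apply: connect1; rewrite /attacks; move: hP; case_minmax; lra.
by rewrite T_out // in cA; move: (cfE A P) hP; case_minmax; lra.
Qed.

Lemma defended_restrict C c : (forall x, supp S x -> T x <= RR x) -> 0 < c ->
  c <= RR C -> defended_at X T C c -> defended_at Y T C c.
Proof.
move=> T_le c0 cR dd B /= RB0; have RC0 := lt_le_trans c0 cR.
have SB := supp_Rset RB0; rewrite /supp RB0 RC0 /=.
case: (lerP (Num.min (RR B) (frho X B C) + c) 1) => [|hB]; [by left | right].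
have RBf := Rset_le_fargs B.
case: (dd B (lt_le_trans RB0 RBf)) => [|[A [cA rAB]]].
  by move: hB RBf; case_minmax; lra.
have AB : attacks X A B by rewrite /attacks; lra.
case SA : (supp S A).
  have RA0 : 0 < RR A := lt_le_trans c0 (le_trans cA (T_le A SA)).
  by exists A; rewrite RA0.
rewrite T_out ?SA // in cA; have OPA := outparentsE (negbT SA) SB AB.
have cL : c <= L B.
  by apply: le_trans (Lset_ge A SB); rewrite OPA !le_min cA rAB (le_trans cA (E_le_fargs A)).
by move: hB; rewrite RsetE //; case_minmax; lra.
Qed.

Lemma defended_of_restrict C c : 0 < c -> c <= 1 -> c <= RR C ->
  defended_at Zout E C c -> defended_at Y T C c -> defended_at X T C c.
Proof.
move=> c0 c1 cR dout dY B B0.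
case: (lerP (Num.min (fargs X B) (frho X B C) + c) 1) => [|hB]; [by left | right].
have SC := supp_Rset (lt_le_trans c0 cR).
have BC : attacks X B C by rewrite /attacks; move: hB c1; case_minmax; lra.
case SB : (supp S B); last first.
  have OPB := outparentsE (negbT SB) SC BC.
  case: (dout B _) => /= [|  |[A [cA rAB]]]; rewrite ?OPB //.
    by move: hB; case_minmax; lra.
  have nSA : ~~ supp S A.
    apply: contraFN SB => SA; apply: supp_SCC_convex SA _ (connect1 BC) SC B0.
    by apply: connect1; rewrite /attacks; lra.
  by exists A; rewrite T_out.
case: (lerP (RR B) (1 - c)) => RB.
  have [|P [cP cOP cr]] := Lset_witness SB c0.
    by move: RB hB; rewrite RsetE //; case_minmax; lra.
  have [nSP _ _] := outparents_pos (lt_le_trans c0 cOP).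
  by exists P; rewrite T_out.
have RB0 : 0 < RR B by lra.
case: (dY B RB0) => [|[A [cA]]]; rewrite /= /supp RB0 ?(lt_le_trans c0 cR) /=.
  by move: hB RB; case_minmax; lra.
by case: ifP => [/andP[RA0 _] rAB | _]; [exists A | lra].
Qed.

End Transfer.

Lemma charfun_restrict_SCC T C : conflict_free X E ->
  (forall x, ~~ supp S x -> T x = E x) -> (forall x, supp S x -> T x <= RR x) ->
  supp S C -> charfun X Cs T C = charfun Y (fcap DD Cs) T C.
Proof.
move=> cfE T_out T_le SC; have rhoY := rho_bounded_restrict RR rhoX.
have rhoO : rho_bounded Zout := rhoX.
apply: eq_by_levels; rewrite ?charfun_ge0 // => c c0; rewrite !charfun_levels //.
split=> [[c1 cC dX] | [c1 cDC dY]].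
- have cR := defended_le_Rset T_out cfE SC c0 c1 (le_trans cC (Cs_le_fargs C)) dX.
  split=> //; last exact (defended_restrict T_out T_le c0 cR dX).
  rewrite /fcap le_min cC andbT DsetE; apply/(charfun_levels _ _ _ rhoO c0); split=> //.
  exact (defended_outparents T_out c0 dX).
- move: cDC; rewrite /fcap le_min DsetE => /andP[/(charfun_levels _ _ _ rhoO c0)[_ cR dO] cC].
  by split=> //; exact (defended_of_restrict T_out c0 c1 cR dO dY).
Qed.

Lemma charfun_restrict_out T C : ~~ supp S C -> charfun Y (fcap DD Cs) T C = 0.
Proof.
move=> nSC; have rhoY := rho_bounded_restrict RR rhoX.
have DD0 : 0 <= DD C by rewrite DsetE charfun_ge0.
apply/eqP; rewrite eq_le charfun_ge0 // andbT.
have DDC0 : 0 <= fcap DD Cs C by rewrite /fcap le_min DD0 Cs_ge0.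
apply: le_trans (charfun_le _ rhoY DDC0) _.
by rewrite /fcap ge_min (le_trans (Dset_le_Rset C)) // /Rset (negbTE nSC).
Qed.

Lemma is_GE_restrict_SCC : is_GE X Cs E -> is_GE Y (fcap DD Cs) (fcap E S).
Proof.
move=> GE_E; have [_ E_fix _] := GE_E; have rhoY := rho_bounded_restrict RR rhoX.
have E_lfp : E = lfp X Cs := is_GE_unique GE_E (is_GE_lfp rhoX Cs_ge0).
have cfE : conflict_free X E by rewrite E_lfp; apply: conflict_free_lfp.
have ES_in x : supp S x -> fcap E S x = E x.
  rewrite /fcap /supp /SCC; case: ifP => _; last by rewrite ltxx.
  by rewrite (min_idPl (E_le_fargs x)).
have ES_out x : ~~ supp S x -> fcap E S x = 0.
  move=> nSx; have S0 : S x = 0 by apply/eqP; rewrite eq_le SCC_ge0 andbT leNgt.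
  by rewrite /fcap S0; apply/min_idPr; rewrite E_lfp lfp_ge0.
have ES_fix C : charfun Y (fcap DD Cs) (fcap E S) C = fcap E S C.
  case SC : (supp S C); last by rewrite charfun_restrict_out ?SC // ES_out ?SC.
  rewrite ES_in // -[RHS]E_fix (charfun_restrict_SCC cfE _ (fun x => E_le_Rset cfE)) //.
  apply: charfun_congr => // A B _ /attacks_restrict[RA0 _ _].
  exact: ES_in (supp_Rset RA0).
split=> [x | x | T TC T_fix x].
- rewrite -ES_fix; apply: charfun_le => //.
  by rewrite /fcap le_min DsetE charfun_ge0 ?Cs_ge0.
- exact: ES_fix.
have T_le y : T y <= RR y.
  by apply: le_trans (TC y) _; rewrite /fcap ge_min Dset_le_Rset.
(* Pasting T into E on S gives a pre-fixed point of the global characteristic function. *)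
pose T2 y := if supp S y then Num.min (T y) (E y) else E y.
have T2_out y : ~~ supp S y -> T2 y = E y by rewrite /T2 => /negbTE->.
have T2_le y : supp S y -> T2 y <= RR y by rewrite /T2 => ->; rewrite ge_min T_le.
have T2_pre y : charfun X Cs T2 y <= T2 y.
  have T2E : charfun X Cs T2 y <= E y.
    rewrite -[X in _ <= X]E_fix; apply: le_charfun => // A B _ _.
    by rewrite /T2; case: ifP; rewrite ?ge_min lexx ?orbT.
  rewrite /T2; case: ifP => Sy //; rewrite le_min T2E andbT.
  rewrite (charfun_restrict_SCC cfE T2_out T2_le Sy) -T_fix.
  apply: le_charfun => // A B _ /attacks_restrict[RA0 _ _].
  by rewrite /T2 (supp_Rset RA0) ge_min lexx.
have := lfp_least rhoX T2_pre x; rewrite -E_lfp.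
case Sx : (supp S x); last by rewrite ES_out ?Sx // -T_fix charfun_ge0.
by rewrite ES_in // /T2 Sx => /le_trans; apply; rewrite ge_min lexx.
Qed.

End Local.
End SCC.

Lemma is_GE_of_SCCs (R : realType) (Args : finType) (X : faf R Args)
    (Cs E : fuzzyset R Args) :
  is_fuzzy (fargs X) -> rho_bounded X ->
  (forall x, 0 <= Cs x) -> (forall x, Cs x <= fargs X x) ->
  (forall x, 0 <= E x) -> (forall x, E x <= fargs X x) ->
  (forall S, in_SCCS X S ->
     is_GE (restrict X (Rset X S E)) (fcap (Dset X S E) Cs) (fcap E S)) ->
  is_GE X Cs E.
Proof.
move=> fargs01 rhoX Cs_ge0 Cs_le_fargs E_ge0 E_le_fargs GE_SCC.
set G := lfp X Cs; have G_GE : is_GE X Cs G := is_GE_lfp rhoX Cs_ge0.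
have G_ge0 : forall x, 0 <= G x := lfp_ge0 rhoX Cs_ge0.
have G_le_fargs x : G x <= fargs X x.
  exact: le_trans (lfp_le_Cs rhoX Cs_ge0 x) (Cs_le_fargs x).
suff -> : E = G by [].
apply/funext => x; elim/(@connect_strict_ind _ (attacks X)): x => x IH.
have agree B y : 0 < outparents X (SCC X x) B -> connect (attacks X) y B -> E y = G y.
  by move=> OPB /(outparent_upstream OPB)/andP[]; apply: IH.
have RE : Rset X (SCC X x) E = Rset X (SCC X x) G.
  by apply: Rset_congr => // B OPB; apply: agree OPB (connect0 _ _).
have DE : Dset X (SCC X x) E = Dset X (SCC X x) G.
  by apply: Dset_congr => // A B OPB AB; apply: agree OPB AB.
have GE_E := GE_SCC _ (ex_intro _ x erefl); rewrite RE DE in GE_E.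
have GE_G := is_GE_restrict_SCC x fargs01 rhoX Cs_ge0 Cs_le_fargs G_le_fargs G_GE.
have := congr1 (@^~ x) (is_GE_unique GE_E GE_G).
by rewrite /fcap /SCC /path_equiv eqxx /= (min_idPl (E_le_fargs x)) (min_idPl (G_le_fargs x)).
Qed.

Theorem mainTheorem7 (R : realType) (Args : finType) (X : faf R Args)
    (E : fuzzyset R Args) :
  wf_faf X -> is_fuzzy E -> fsubset E (fargs X) ->
  forall Cs : fuzzyset R Args, is_fuzzy Cs -> fsubset Cs (fargs X) ->
    (is_GE X Cs E <->
     forall S, in_SCCS X S ->
       is_GE (restrict X (Rset X S E)) (fcap (Dset X S E) Cs) (fcap E S)).
Proof.
move=> [fargs01 rhoX] E01 E_le_fargs Cs Cs01 Cs_le_fargs.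
have E_ge0 x : 0 <= E x by case/andP: (E01 x).
have Cs_ge0 x : 0 <= Cs x by case/andP: (Cs01 x).
split=> [GE_E S [A ->] | GE_SCC].
  exact: is_GE_restrict_SCC.
exact: is_GE_of_SCCs.
Qed.
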